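(* The maps $\mu^\bullet X$ do not satisfy the monad associativity law on the whole capacity functor: there exist a compactum $X$ and a capacity $\gimel\in M(M(MX))$ such that $$\mu^\bullet X\circ \mu^\bullet (MX)(\gimel)\neq \mu^\bullet X\circ M(\mu^\bullet X)(\gimel).$$ (In fact one can take $X=\{a,b\}$ to be the two-point discrete space; the two sides then differ on the closed set $\{a\}$.)
   Context: A compactum is a compact Hausdorff space; $I=[0,1]$; $\mathcal F(X)$ denotes the family of closed subsets of $X$. An (upper-semicontinuous) capacity on a compactum $X$ is a function $\nu:\mathcal F(X)\to I$ such that: (1) $\nu(X)=1$, $\nu(\emptyset)=0$; (2) if $F\subset G$ then $\nu(F)\le\nu(G)$; (3) if $\nu(F)<a$ then there is an open set $O\supset F$ with $\nu(B)<a$ for every closed $B\subset O$. For open $U\subset X$ one puts $\nu(U)=\sup\{\nu(K): K\text{ closed},\ K\subset U\}$. $MX$ is the set of all capacities on $X$, topologized by the subbase consisting of the sets $\{c\in MX: c(F)<a\}$ ($F$ closed, $a\in I$) and $\{c\in MX: c(U)>a\}$ ($U$ open, $a\in I$); with this topology $MX$ is a compactum. For a continuous map $f:X\to Y$ of compacta, $Mf:MX\to MY$ is $Mf(c)(F)=c(f^{-1}(F))$. For a closed $F\subset X$ and $t\in I$ put $F_t=\{c\in MX: c(F)\ge t\}$, a closed subset of $MX$. The map $\mu^\bullet X: M(MX)\to MX$ is defined by $\mu^\bullet X(\mathcal C)(F)=\max\{\mathcal C(F_t)\cdot t: t\in(0,1]\}$ for $\mathcal C\in M(MX)$ and closed $F\subset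 X$ (the maximum exists). *)

From Stdlib Require Import Reals List ClassicalEpsilon.
Open Scope R_scope.

Definition is_topology {T : Type} (P : (T -> Prop) -> Prop) : Prop :=
  P (fun _ => True) /\
  (forall U V, P U -> P V -> P (fun x => U x /\ V x)) /\
  (forall S : (T -> Prop) -> Prop,
      (forall U, S U -> P U) -> P (fun x => exists U, S U /\ U x)).

Record space := Space {
  pt :> Type;
  is_open : (pt -> Prop) -> Prop;
  is_open_topology : is_topology is_open
}.

Definition closed (X : space) (F : X -> Prop) : Prop :=
  is_open X (fun x => ~ F x).

Definition subset {T : Type} (A B : T -> Prop) : Prop := forall x, A x -> B x.

Definition compact (X : space) : Prop :=
  forall S : (X -> Prop) -> Prop,
    (forall U, S U -> is_open X U) ->
    (forall x : X, exists U, S U /\ U x) ->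
    exists l : list (X -> Prop),
      (forall U, In U l -> S U) /\ (forall x : X, exists U, In U l /\ U x).

Definition hausdorff (X : space) : Prop :=
  forall x y : X, x <> y ->
    exists U V, is_open X U /\ is_open X V /\ U x /\ V y /\
                (forall z, ~ (U z /\ V z)).

Definition compactum (X : space) : Prop := compact X /\ hausdorff X.

Definition generated_open {T : Type} (B : (T -> Prop) -> Prop) (U : T -> Prop) : Prop :=
  forall P : (T -> Prop) -> Prop, is_topology P -> (forall V, B V -> P V) -> P U.

Lemma generated_open_topology {T : Type} (B : (T -> Prop) -> Prop) :
  is_topology (generated_open B).
Proof.
  split; [|split].
  - intros P [H _] _; exact H.
  - intros U V HU HV P HP HB. destruct HP as [H1 [H2 H3]].
    apply H2; [apply HU | apply HV]; try split; auto.
  - intros S HS P HP HB. destruct HP as [H1 [H2 H3]].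
    apply H3. intros U HU. apply HS; [exact HU | split; auto | exact HB].
Qed.

(** Upper-semicontinuous capacity on [X], as a set function on all subsets,
    normalised to be 0 off closed sets (only its values on closed sets matter). *)
Definition is_capacity (X : space) (nu : (X -> Prop) -> R) : Prop :=
  nu (fun _ => True) = 1 /\
  nu (fun _ => False) = 0 /\
  (forall F, closed X F -> 0 <= nu F <= 1) /\
  (forall F G, closed X F -> closed X G -> subset F G -> nu F <= nu G) /\
  (forall F a, closed X F -> nu F < a ->
     exists O, is_open X O /\ subset F O /\
       forall B, closed X B -> subset B O -> nu B < a) /\
  (forall F, ~ closed X F -> nu F = 0).

Definition cap (X : space) : Type := {nu : (X -> Prop) -> R | is_capacity X nu}.

Definition capval {X : space} (c : cap X) : (X -> Prop) -> R := proj1_sig c.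

(** [cap_open_gt nu U a] means [nu(U) > a], where
    [nu(U) = sup {nu(K) : K closed, K ⊂ U}]. *)
Definition cap_open_gt (X : space) (nu : (X -> Prop) -> R) (U : X -> Prop) (a : R) : Prop :=
  exists K, closed X K /\ subset K U /\ a < nu K.

Definition M_subbase (X : space) (V : cap X -> Prop) : Prop :=
  (exists F a, closed X F /\ 0 <= a <= 1 /\ V = (fun c => capval c F < a)) \/
  (exists U a, is_open X U /\ 0 <= a <= 1 /\ V = (fun c => cap_open_gt X (capval c) U a)).

Definition M (X : space) : space :=
  Space (cap X) (generated_open (M_subbase X)) (generated_open_topology (M_subbase X)).

Definition level_set (X : space) (F : X -> Prop) (t : R) : M X -> Prop :=
  fun c => capval c F >= t.

Definition is_max_level (X : space) (C : (M X -> Prop) -> R) (F : X -> Prop) (m : R) : Prop :=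
  (exists t, 0 < t <= 1 /\ m = C (level_set X F t) * t) /\
  (forall t, 0 < t <= 1 -> C (level_set X F t) * t <= m).

Definition mu_bullet (X : space) (C : (M X -> Prop) -> R) : (X -> Prop) -> R :=
  fun F => epsilon (inhabits 0) (fun m => is_max_level X C F m).

(** Preimage of [F ⊂ MX] under the map [mu_bullet X : M(MX) -> MX]. *)
Definition mu_bullet_preimage (X : space) (F : M X -> Prop) : M (M X) -> Prop :=
  fun C => exists c : M X, F c /\
    forall G, closed X G -> capval c G = mu_bullet X (capval C) G.

Definition M_mu_bullet (X : space) (gimel : M (M (M X))) : (M X -> Prop) -> R :=
  fun F => capval gimel (mu_bullet_preimage X F).

(** We exhibit the counterexample of the paper: [X] is the two-point discrete
    space [{a, b}] (here [bool], with [a = true]), and [gimel] is the capacity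
    on [M(M X)] that equals 1 on closed sets containing both of two capacities
    [C1, C2] on [M X] and 0 otherwise.  On the closed set [{a}] the two sides
    of the associativity law evaluate to [1/4] and [1/2]. *)

From Stdlib Require Import Reals List Lra Lia Rtopology.
From Stdlib Require Import Classical ClassicalEpsilon FunctionalExtensionality
  PropExtensionality ProofIrrelevance.
Open Scope R_scope.

Definition dec (P : Prop) : {P} + {~ P} := excluded_middle_informative P.

Lemma pred_ext {T : Type} (A B : T -> Prop) : (forall x, A x <-> B x) -> A = B.
Proof.
  intros H; apply functional_extensionality; intros x.
  apply propositional_extensionality, H.
Qed.

Section OpenSets.
Variable Y : space.

Lemma open_full : is_open Y (fun _ => True).
Proof. destruct (is_open_topology Y) as [H _]; exact H. Qed.

Lemma open_inter (U V : Y -> Prop) :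
  is_open Y U -> is_open Y V -> is_open Y (fun x => U x /\ V x).
Proof. destruct (is_open_topology Y) as [_ [H _]]; exact (H U V). Qed.

Lemma open_union (S : (Y -> Prop) -> Prop) :
  (forall U, S U -> is_open Y U) -> is_open Y (fun x => exists U, S U /\ U x).
Proof. destruct (is_open_topology Y) as [_ [_ H]]; exact (H S). Qed.

Lemma open_const (P : Prop) : is_open Y (fun _ => P).
Proof.
  replace (fun _ : Y => P)
    with (fun x : Y => exists U, (P /\ U = (fun _ => True)) /\ U x).
  - apply open_union; intros U [_ ->]; apply open_full.
  - apply pred_ext; intros x; split.
    + intros [U [[HP _] _]]; exact HP.
    + intros HP; exists (fun _ => True); tauto.
Qed.

Lemma open_local (U : Y -> Prop) :
  (forall x, U x -> exists V, is_open Y V /\ V x /\ subset V U) -> is_open Y U.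
Proof.
  intros H. replace U with (fun x => exists V, (is_open Y V /\ subset V U) /\ V x).
  - apply open_union; intros V [HV _]; exact HV.
  - apply pred_ext; intros x; split.
    + intros [V [[_ HVU] Vx]]; exact (HVU x Vx).
    + intros Ux; destruct (H x Ux) as [V [HV [Vx HVU]]]; exists V; tauto.
Qed.

Lemma open_finite_inter (U : nat -> Y -> Prop) (n : nat) :
  (forall k, (k < n)%nat -> is_open Y (U k)) ->
  is_open Y (fun x => forall k, (k < n)%nat -> U k x).
Proof.
  induction n as [|n IH]; intros H.
  - replace (fun x : Y => forall k, (k < 0)%nat -> U k x) with (fun _ : Y => True).
    + apply open_full.
    + apply pred_ext; intros x; split; [intros _ k Hk; lia | tauto].
  - replace (fun x : Y => forall k, (k < S n)%nat -> U k x)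
      with (fun x => (forall k, (k < n)%nat -> U k x) /\ U n x).
    + apply open_inter; [apply IH; intros k Hk; apply H; lia | apply H; lia].
    + apply pred_ext; intros x; split.
      * intros [Hlt Hn] k Hk.
        destruct (Nat.eq_dec k n) as [->|Hne]; [exact Hn | apply Hlt; lia].
      * intros Hall; split; [intros k Hk; apply Hall; lia | apply Hall; lia].
Qed.

Lemma closed_full : closed Y (fun _ => True).
Proof. exact (open_const (~ True)). Qed.

End OpenSets.

Definition T1 (Y : space) : Prop := forall y : Y, is_open Y (fun x => x <> y).

Section CapacityFacts.
Variable Y : space.
Implicit Types (c : cap Y) (F G : Y -> Prop).

Lemma cap_prop c : is_capacity Y (capval c).
Proof. exact (proj2_sig c). Qed.

Lemma cap_bounds c F : 0 <= capval c F <= 1.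
Proof.
  destruct (cap_prop c) as [_ [_ [Hb [_ [_ Hn]]]]].
  destruct (classic (closed Y F)) as [HF|HF]; [exact (Hb F HF) | rewrite (Hn F HF); lra].
Qed.

Lemma cap_mono c F G : closed Y F -> closed Y G -> subset F G -> capval c F <= capval c G.
Proof. destruct (cap_prop c) as [_ [_ [_ [Hm _]]]]; exact (Hm F G). Qed.

Lemma cap_full c : capval c (fun _ => True) = 1.
Proof. destruct (cap_prop c) as [H _]; exact H. Qed.

Lemma cap_empty c : capval c (fun _ => False) = 0.
Proof. destruct (cap_prop c) as [_ [H _]]; exact H. Qed.

Lemma cap_usc c F a : closed Y F -> capval c F < a ->
  exists O, is_open Y O /\ subset F O /\
    forall B, closed Y B -> subset B O -> capval c B < a.
Proof. destruct (cap_prop c) as [_ [_ [_ [_ [H _]]]]]; exact (H F a). Qed.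

Lemma cap_nonclosed c F : ~ closed Y F -> capval c F = 0.
Proof. destruct (cap_prop c) as [_ [_ [_ [_ [_ H]]]]]; exact (H F). Qed.

Lemma cap_ext c c' : (forall F, closed Y F -> capval c F = capval c' F) -> c = c'.
Proof.
  intros H. assert (Heq : capval c = capval c').
  { apply functional_extensionality; intros F.
    destruct (classic (closed Y F)) as [HF|HF]; [exact (H F HF)|].
    rewrite !cap_nonclosed by exact HF; reflexivity. }
  destruct c as [nu Hnu], c' as [nu' Hnu']; cbn in Heq; subst nu'.
  f_equal; apply proof_irrelevance.
Qed.

End CapacityFacts.

Definition pat (P1 P2 : Prop) (v1 v2 : R) : R :=
  if dec (P1 /\ P2) then 1 else if dec P1 then v1 else if dec P2 then v2 else 0.

Lemma pat_mono P1 P2 Q1 Q2 v1 v2 : 0 <= v1 <= 1 -> 0 <= v2 <= 1 ->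
  (P1 -> Q1) -> (P2 -> Q2) -> pat P1 P2 v1 v2 <= pat Q1 Q2 v1 v2.
Proof. intros; unfold pat; repeat destruct dec; try lra; exfalso; tauto. Qed.

Lemma pat_bounds P1 P2 v1 v2 : 0 <= v1 <= 1 -> 0 <= v2 <= 1 -> 0 <= pat P1 P2 v1 v2 <= 1.
Proof. intros; unfold pat; repeat destruct dec; lra. Qed.

Definition pair_val {Y : space} (y1 y2 : Y) (v1 v2 : R) (F : Y -> Prop) : R :=
  if dec (closed Y F) then pat (F y1) (F y2) v1 v2 else 0.

Lemma open_or_neq (Y : space) (P : Prop) (y : Y) :
  T1 Y -> is_open Y (fun x => P \/ x <> y).
Proof.
  intros HT1. destruct (classic P) as [HP|HP].
  - replace (fun x : Y => P \/ x <> y) with (fun _ : Y => True);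
      [apply open_full | apply pred_ext; tauto].
  - replace (fun x : Y => P \/ x <> y) with (fun x : Y => x <> y);
      [apply HT1 | apply pred_ext; tauto].
Qed.

Lemma pair_is_capacity (Y : space) (y1 y2 : Y) (v1 v2 : R) :
  T1 Y -> 0 <= v1 <= 1 -> 0 <= v2 <= 1 -> is_capacity Y (pair_val y1 y2 v1 v2).
Proof.
  intros HT1 H1 H2. unfold pair_val.
  split; [|split; [|split; [|split; [|split]]]].
  - destruct dec as [_|Hn]; [|exfalso; exact (Hn (closed_full Y))].
    unfold pat; destruct dec; tauto.
  - destruct dec; [|reflexivity]. unfold pat; repeat destruct dec; tauto.
  - intros F HF; destruct dec; [apply pat_bounds; assumption | tauto].
  - intros F G HF HG HFG. do 2 (destruct dec; [|tauto]). apply pat_mono; auto.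
  - (* the open set keeps exactly the points among y1, y2 lying in F *)
    intros F a HF Ha. destruct dec as [_|]; [|tauto].
    exists (fun x => (F y1 \/ x <> y1) /\ (F y2 \/ x <> y2)). split; [|split].
    + apply open_inter; apply open_or_neq, HT1.
    + intros x Fx; split.
      * destruct (classic (x = y1)) as [->|]; tauto.
      * destruct (classic (x = y2)) as [->|]; tauto.
    + intros B HB HBO. destruct dec as [_|]; [|tauto].
      eapply Rle_lt_trans; [|exact Ha]. apply pat_mono; auto.
      * intros Hb; destruct (HBO y1 Hb) as [[|] _]; tauto.
      * intros Hb; destruct (HBO y2 Hb) as [_ [|]]; tauto.
  - intros F HF; destruct dec; tauto.
Qed.

Definition pair_cap {Y : space} (y1 y2 : Y) (v1 v2 : R) (HT1 : T1 Y)
  (H1 : 0 <= v1 <= 1) (H2 : 0 <= v2 <= 1) : cap Y :=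
  exist _ (pair_val y1 y2 v1 v2) (pair_is_capacity Y y1 y2 v1 v2 HT1 H1 H2).

Lemma pair_cap_closed (Y : space) (y1 y2 : Y) v1 v2 HT1 H1 H2 F : closed Y F ->
  capval (pair_cap y1 y2 v1 v2 HT1 H1 H2) F = pat (F y1) (F y2) v1 v2.
Proof.
  intros HF; unfold capval, pair_cap, pair_val; cbn.
  destruct dec; [reflexivity | tauto].
Qed.

Section CapacitySpace.
Variable Y : space.

Lemma subbase_open (V : cap Y -> Prop) : M_subbase Y V -> is_open (M Y) V.
Proof. intros H; cbn; intros P _ HB; exact (HB V H). Qed.

(** [{c : c(L) < a}] is open for every threshold [a]: it is a subbasic set
    when [0 <= a <= 1], and empty or full otherwise. *)
Lemma open_cap_lt (L : Y -> Prop) (a : R) :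
  closed Y L -> is_open (M Y) (fun c : cap Y => capval c L < a).
Proof.
  intros HL. destruct (Rle_dec 0 a) as [Ha0|Ha0]; [destruct (Rle_dec a 1) as [Ha1|Ha1]|].
  - apply subbase_open; left; exists L, a; auto.
  - replace (fun c : cap Y => capval c L < a) with (fun _ : cap Y => 1 < a);
      [apply open_const|].
    apply pred_ext; intros c; pose proof (cap_bounds Y c L); split; intros; lra.
  - replace (fun c : cap Y => capval c L < a) with (fun _ : cap Y => 1 < a);
      [apply open_const|].
    apply pred_ext; intros c; pose proof (cap_bounds Y c L); split; intros; lra.
Qed.

Lemma open_cap_gt (U : Y -> Prop) (a : R) : is_open Y U -> 0 <= a <= 1 ->
  is_open (M Y) (fun c : cap Y => cap_open_gt Y (capval c) U a).
Proof. intros HU Ha; apply subbase_open; right; exists U, a; auto. Qed.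

Lemma level_closed (F : Y -> Prop) (t : R) : closed Y F -> closed (M Y) (level_set Y F t).
Proof.
  intros HF. unfold closed.
  replace (fun c : M Y => ~ level_set Y F t c) with (fun c : cap Y => capval c F < t).
  - exact (open_cap_lt F t HF).
  - apply pred_ext; intros c; unfold level_set; split; intros; lra.
Qed.

Lemma level_value_antitone (C : cap (M Y)) (F : Y -> Prop) (s t : R) :
  closed Y F -> s <= t -> capval C (level_set Y F t) <= capval C (level_set Y F s).
Proof.
  intros HF Hst. apply cap_mono; try apply level_closed, HF.
  intros c Hc; unfold level_set in *; lra.
Qed.

(** [M Y] is T1: two distinct capacities differ on a closed set [G], and a
    subbasic neighbourhood of one of them, defined through [G], misses the other. *)
Lemma M_T1 : T1 (M Y).
Proof.
  intros y. apply open_local; intros x Hxy.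
  assert (HG : exists G, closed Y G /\ capval x G <> capval y G).
  { apply NNPP; intros Hno. apply Hxy, cap_ext; intros G HG.
    apply NNPP; intros Hne; apply Hno; exists G; auto. }
  destruct HG as [G [HG Hne]].
  destruct (Rlt_or_le (capval x G) (capval y G)) as [Hlt|[Hgt|Heq]].
  - exists (fun c : cap Y => capval c G < capval y G); split; [|split].
    + exact (open_cap_lt G _ HG).
    + exact Hlt.
    + intros c Hc ->; lra.
  - set (a := (capval x G + capval y G) / 2).
    destruct (cap_usc Y y G a HG ltac:(unfold a; lra)) as [O [HO [HGO Hsmall]]].
    exists (fun c : cap Y => cap_open_gt Y (capval c) O a); split; [|split].
    + apply open_cap_gt; [exact HO|].
      pose proof (cap_bounds Y x G); pose proof (cap_bounds Y y G); unfold a; lra.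
    + exists G; split; [exact HG|split; [exact HGO|unfold a; lra]].
    + intros c [K [HK [HKO HaK]]] ->; specialize (Hsmall K HK HKO); lra.
  - exfalso; exact (Hne (eq_sym Heq)).
Qed.

End CapacitySpace.

Lemma mu_bullet_max (Y : space) (C : (M Y -> Prop) -> R) (F : Y -> Prop) (m : R) :
  is_max_level Y C F m -> mu_bullet Y C F = m.
Proof.
  intros H. unfold mu_bullet.
  pose proof (epsilon_spec (inhabits 0) (fun m => is_max_level Y C F m) (ex_intro _ m H)) as H'.
  destruct H as [[t [Ht Et]] Hle], H' as [[t' [Ht' Et']] Hle'].
  specialize (Hle t' Ht'); specialize (Hle' t Ht). lra.
Qed.

Lemma mu_bullet_step (Y : space) (C : (M Y -> Prop) -> R) (F : Y -> Prop) (tau v : R) :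
  0 < tau <= 1 -> 0 <= v ->
  (forall s, 0 < s <= 1 -> C (level_set Y F s) = if Rle_dec s tau then v else 0) ->
  mu_bullet Y C F = v * tau.
Proof.
  intros Htau Hv Hstep. apply mu_bullet_max; split.
  - exists tau; split; [exact Htau|]. rewrite Hstep by exact Htau.
    destruct Rle_dec; [reflexivity | lra].
  - intros s Hs. rewrite Hstep by exact Hs. destruct Rle_dec; nra.
Qed.

Lemma is_max_level_bounds (Y : space) (C : cap (M Y)) (F : Y -> Prop) (m : R) :
  is_max_level Y (capval C) F m -> 0 <= m <= 1.
Proof. intros [[t [Ht ->]] _]. pose proof (cap_bounds (M Y) C (level_set Y F t)). nra. Qed.

Lemma mu_bullet_full (Y : space) (C : cap (M Y)) : mu_bullet Y (capval C) (fun _ => True) = 1.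
Proof.
  rewrite (mu_bullet_step Y (capval C) _ 1 1); [lra|lra|lra|].
  intros s Hs.
  replace (level_set Y (fun _ => True) s) with (fun _ : M Y => True).
  - rewrite cap_full. destruct Rle_dec; [reflexivity | lra].
  - apply pred_ext; intros c; unfold level_set; rewrite cap_full; split; intros; lra.
Qed.

Lemma mu_bullet_empty (Y : space) (C : cap (M Y)) : mu_bullet Y (capval C) (fun _ => False) = 0.
Proof.
  rewrite (mu_bullet_step Y (capval C) _ 1 0); [lra|lra|lra|].
  intros s Hs.
  replace (level_set Y (fun _ => False) s) with (fun _ : M Y => False).
  - rewrite cap_empty. destruct Rle_dec; reflexivity.
  - apply pred_ext; intros c; unfold level_set; rewrite cap_empty; split; intros; [tauto|lra].
Qed.

Lemma lt_div_iff (x y d : R) : 0 < d -> (x < y / d <-> x * d < y).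
Proof.
  intros Hd; split; intros H.
  - apply (Rmult_lt_compat_r d) in H; [|exact Hd].
    unfold Rdiv in H; rewrite Rmult_assoc, Rinv_l in H; lra.
  - apply (Rmult_lt_reg_r d); [exact Hd|].
    unfold Rdiv; rewrite Rmult_assoc, Rinv_l; lra.
Qed.

Lemma grid_cell (N : nat) (s : R) : (0 < N)%nat -> 0 < s <= 1 ->
  exists j, (j < N)%nat /\ INR j / INR N < s <= INR (S j) / INR N.
Proof.
  intros HN Hs. pose proof (lt_0_INR N HN) as HN'.
  assert (Hcells : forall n, s <= INR n / INR N ->
            exists j, (j < n)%nat /\ INR j / INR N < s <= INR (S j) / INR N).
  { induction n as [|n IH]; intros Hsn.
    - change (INR 0) with 0 in Hsn; unfold Rdiv in Hsn; rewrite Rmult_0_l in Hsn; lra.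
    - destruct (Rle_lt_dec s (INR n / INR N)) as [Hle|Hgt].
      + destruct (IH Hle) as [j [Hj Hjs]]; exists j; split; [lia | exact Hjs].
      + exists n; split; [lia | split; assumption]. }
  apply Hcells. unfold Rdiv; rewrite Rinv_r; lra.
Qed.

(** Around [C0] with value [m0 < a] we use
    the finitely many subbasic conditions [C(G_{j/N}) * (j+1)/N < a], [j < N]:
    they hold at [C0] once [N] is large, and on the cell [(j/N, (j+1)/N]]
    they bound [C(G_s) * s] by [C(G_{j/N}) * (j+1)/N]. *)
Lemma mu_bullet_lt_open (Y : space) (G : Y -> Prop) (a : R) :
  closed Y G ->
  (forall C : cap (M Y), exists m, is_max_level Y (capval C) G m) ->
  is_open (M (M Y)) (fun C : cap (M Y) => mu_bullet Y (capval C) G < a).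
Proof.
  intros HG Hmax. apply open_local; intros C0 HC0.
  destruct (Hmax C0) as [m0 Hm0].
  rewrite (mu_bullet_max _ _ _ _ Hm0) in HC0.
  pose proof (is_max_level_bounds _ _ _ _ Hm0) as Hm0b.
  (* beyond the index K the factor (j+1)/j costs less than a - m0 *)
  destruct (INR_archimed (a - m0) m0 ltac:(lra)) as [K0 HK0].
  set (K := S K0).
  assert (HK : m0 < INR K * (a - m0)) by (unfold K; rewrite S_INR, Rmult_plus_distr_r; lra).
  assert (HK1 : 1 <= INR K) by (unfold K; rewrite S_INR; pose proof (pos_INR K0); lra).
  destruct (INR_archimed a (INR K) ltac:(lra)) as [N HN].
  assert (HN0 : (0 < N)%nat) by (destruct N; [change (INR 0) with 0 in HN; lra | lia]).
  pose proof (lt_0_INR N HN0) as HNpos.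
  exists (fun C : cap (M Y) => forall j, (j < N)%nat ->
            capval C (level_set Y G (INR j / INR N)) < a * INR N / INR (S j)).
  split; [|split].
  - apply open_finite_inter; intros j _. apply open_cap_lt, level_closed, HG.
  - intros j Hj. apply lt_div_iff; [apply lt_0_INR; lia|].
    pose proof (cap_bounds _ C0 (level_set Y G (INR j / INR N))) as Hphi.
    set (phi := capval C0 (level_set Y G (INR j / INR N))) in *.
    destruct (Compare_dec.le_lt_dec K j) as [HKj|HjK].
    + apply le_INR in HKj. apply lt_INR in Hj.
      assert (Hj1 : 0 < INR j / INR N <= 1).
      { split; [apply Rdiv_lt_0_compat; lra|].
        apply (Rmult_le_reg_r (INR N)); [lra|].
        unfold Rdiv; rewrite Rmult_assoc, Rinv_l; lra. }
      destruct Hm0 as [_ Hle]. specialize (Hle _ Hj1).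
      assert (Hphij : phi * INR j <= m0 * INR N).
      { apply (Rmult_le_compat_r (INR N)) in Hle; [|lra].
        replace (phi * INR j) with (phi * (INR j / INR N) * INR N) by (field; lra).
        exact Hle. }
      assert (Hm0j : m0 * (INR j + 1) < a * INR j) by nra.
      rewrite S_INR.
      assert (phi * (INR j + 1) * INR j < a * INR N * INR j) by nra.
      nra.
    + apply le_INR in HjK. rewrite S_INR. rewrite S_INR in HjK.
      pose proof (pos_INR j). nra.
  - intros C HC. destruct (Hmax C) as [m Hm].
    rewrite (mu_bullet_max _ _ _ _ Hm). destruct Hm as [[t [Ht ->]] _].
    destruct (grid_cell N t HN0 Ht) as [j [Hj [Hjt Htj]]].
    specialize (HC j Hj). apply lt_div_iff in HC; [|apply lt_0_INR; lia].
    assert (Hmono : capval C (level_set Y G t) <= capval C (level_set Y G (INR j / INR N)))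
      by (apply level_value_antitone; [exact HG | lra]).
    assert (HtN : t * INR N <= INR (S j)).
    { apply (Rmult_le_compat_r (INR N)) in Htj; [|lra].
      unfold Rdiv in Htj; rewrite Rmult_assoc, Rinv_l in Htj; lra. }
    pose proof (cap_bounds _ C (level_set Y G t)).
    pose proof (cap_bounds _ C (level_set Y G (INR j / INR N))).
    apply (Rmult_lt_reg_r (INR N)); [exact HNpos|].
    apply Rle_lt_trans with (capval C (level_set Y G (INR j / INR N)) * INR (S j));
      [|exact HC].
    rewrite Rmult_assoc. apply Rmult_le_compat; nra.
Qed.

Lemma small_inv (e : R) : 0 < e -> exists N, forall p, (N <= p)%nat -> / (INR p + 1) < e.
Proof.
  intros He. destruct (INR_archimed e 1 He) as [N HN]. exists N; intros p Hp.
  apply le_INR in Hp. pose proof (pos_INR p).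
  apply (Rmult_lt_reg_l (INR p + 1)); [lra|]. rewrite Rinv_r; [nra | lra].
Qed.

Lemma cluster_point (u : nat -> R) : (forall n, 0 <= u n <= 1) ->
  exists l, 0 <= l <= 1 /\
    forall e, 0 < e -> exists p, Rabs (u p - l) < e /\ / (INR p + 1) < e.
Proof.
  intros Hu.
  destruct (Bolzano_Weierstrass u (fun x => 0 <= x <= 1) (compact_P3 0 1) Hu) as [l Hl].
  assert (Happrox : forall e, 0 < e -> exists p, Rabs (u p - l) < e /\ / (INR p + 1) < e).
  { intros e He. destruct (small_inv e He) as [N HN].
    destruct (Hl (disc l (mkposreal e He)) N) as [p [Hp Hd]].
    { exists (mkposreal e He); intros y Hy; exact Hy. }
    exists p; split; [exact Hd | exact (HN p Hp)]. }
  exists l; split; [|exact Happrox].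
  split; apply Rnot_lt_le; intros Hc.
  - destruct (Happrox (- l)) as [p [Hp _]]; [lra|].
    apply Rabs_def2 in Hp. specialize (Hu p); lra.
  - destruct (Happrox (l - 1)) as [p [Hp _]]; [lra|].
    apply Rabs_def2 in Hp. specialize (Hu p); lra.
Qed.

Section ScaledMaximum.
Variable phi : R -> R.
Hypothesis phi_bounds : forall t, 0 < t <= 1 -> 0 <= phi t <= 1.
Hypothesis phi_antitone : forall t t', 0 < t <= t' -> t' <= 1 -> phi t' <= phi t.
Hypothesis phi_left_continuous :
  forall t a, 0 < t <= 1 -> phi t < a -> exists r, 0 < r < t /\ phi r < a.

(** On the left this uses the left
    continuity of [phi], on the right its monotonicity. *)
Lemma scaled_usc (l sig : R) : 0 < l <= 1 -> phi l * l < sig ->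
  exists rho eta, 0 < rho /\ 0 < eta /\
    forall s, 0 < s <= 1 -> Rabs (s - l) < rho -> phi s * s <= sig - eta.
Proof.
  intros Hl Hsig. pose proof (phi_bounds l Hl) as Hpl.
  set (a := (phi l + sig / l) / 2).
  assert (Hla : l * a = (phi l * l + sig) / 2) by (unfold a; field; lra).
  assert (Hgap : l * (a - phi l) = (sig - phi l * l) / 2) by (unfold a; field; lra).
  assert (Ha : phi l < a) by nra.
  destruct (phi_left_continuous l a Hl Ha) as [r [Hr Hra]].
  set (d := (sig - l * a) / (2 * a)).
  assert (Hd : 0 < d) by (unfold d; apply Rdiv_lt_0_compat; lra).
  assert (Had : a * d = (sig - l * a) / 2) by (unfold d; field; lra).
  exists (Rmin (l - r) d), ((sig - l * a) / 2).
  split; [apply Rmin_pos; lra | split; [lra|]].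
  intros s Hs Hsl. apply Rabs_def2 in Hsl.
  pose proof (Rmin_l (l - r) d); pose proof (Rmin_r (l - r) d).
  assert (Hphis : phi s <= a).
  { destruct (Rle_lt_dec s l).
    - assert (phi s <= phi r) by (apply phi_antitone; lra). lra.
    - assert (phi s <= phi l) by (apply phi_antitone; lra). lra. }
  assert (phi s * s <= a * s) by (apply Rmult_le_compat_r; lra).
  assert (a * s <= a * (l + d)) by (apply Rmult_le_compat_l; lra).
  nra.
Qed.

(** The supremum of [phi t * t] over [(0,1]] is attained: a maximizing
    sequence clusters at some [l > 0], where the value reaches the supremum
    by upper semicontinuity. *)
Lemma scaled_max : exists t, 0 < t <= 1 /\ forall s, 0 < s <= 1 -> phi s * s <= phi t * t.
Proof.
  set (E := fun v => exists s, 0 < s <= 1 /\ v = phi s * s).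
  destruct (completeness E) as [sig [Hub Hlub]].
  { exists 1; intros v [s [Hs ->]]; specialize (phi_bounds s Hs); nra. }
  { exists (phi 1 * 1), 1; split; [lra | reflexivity]. }
  assert (Hup : forall s, 0 < s <= 1 -> phi s * s <= sig)
    by (intros s Hs; apply Hub; exists s; auto).
  destruct (Rle_lt_dec sig (phi 1 * 1)) as [Hle|Hlt].
  { exists 1; split; [lra|]. intros s Hs; specialize (Hup s Hs); lra. }
  assert (Hseq : forall n : nat, exists s, 0 < s <= 1 /\ sig - / (INR n + 1) < phi s * s).
  { intros n. assert (0 < / (INR n + 1)) by (apply Rinv_0_lt_compat; pose proof (pos_INR n); lra).
    apply NNPP; intros Hn.
    assert (sig <= sig - / (INR n + 1)); [|lra].
    apply Hlub; intros v [s [Hs ->]].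
    apply Rnot_lt_le; intros Hv; apply Hn; exists s; split; [exact Hs | lra]. }
  destruct (choice _ Hseq) as [u Hu].
  destruct (cluster_point u) as [l [Hl01 Hl]]; [intros n; destruct (Hu n); lra|].
  assert (Hsig_l : sig <= l).
  { apply Rnot_lt_le; intros Hc.
    destruct (Hl ((sig - l) / 2)) as [p [Hp Hinv]]; [lra|].
    apply Rabs_def2 in Hp. destruct (Hu p) as [Hp1 Hp2].
    specialize (phi_bounds _ Hp1).
    assert (phi (u p) * u p <= u p) by nra. lra. }
  pose proof (phi_bounds 1 ltac:(lra)).
  exists l; split; [lra|].
  intros s Hs. apply Rle_trans with sig; [exact (Hup s Hs)|].
  apply Rnot_lt_le; intros Hc.
  destruct (scaled_usc l sig ltac:(lra) Hc) as [rho [eta [Hrho [Heta Hnear]]]].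
  destruct (Hl (Rmin rho eta)) as [p [Hp Hinv]]; [apply Rmin_pos; lra|].
  pose proof (Rmin_l rho eta); pose proof (Rmin_r rho eta).
  destruct (Hu p) as [Hp1 Hp2].
  specialize (Hnear (u p) Hp1 ltac:(lra)). lra.
Qed.

End ScaledMaximum.

Lemma discrete_topology (T : Type) : is_topology (fun _ : T -> Prop => True).
Proof. split; [|split]; auto. Qed.

Definition Xb : space := Space bool (fun _ => True) (discrete_topology bool).

Lemma Xb_closed (F : Xb -> Prop) : closed Xb F.
Proof. exact I. Qed.

Lemma Xb_T1 : T1 Xb.
Proof. intros y; exact I. Qed.

Lemma Xb_compactum : compactum Xb.
Proof.
  split.
  - intros S HS Hcov.
    destruct (Hcov true) as [U1 [HU1 U1t]], (Hcov false) as [U2 [HU2 U2f]].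
    exists (U1 :: U2 :: nil). split.
    + intros U [<-|[<-|[]]]; assumption.
    + intros [|]; [exists U1 | exists U2]; simpl; auto.
  - intros x y Hxy. exists (fun z => z = x), (fun z => z = y).
    repeat split; try exact I; try reflexivity.
    intros z [-> ->]; exact (Hxy eq_refl).
Qed.

Lemma Xb_setfun_ext (f g : (Xb -> Prop) -> R) :
  f (fun _ => True) = g (fun _ => True) -> f (fun _ => False) = g (fun _ => False) ->
  (forall b, f (fun x => x = b) = g (fun x => x = b)) -> forall G, f G = g G.
Proof.
  intros Hfull Hempty Hpt G.
  destruct (classic (G true)) as [Ht|Ht]; destruct (classic (G false)) as [Hf|Hf].
  - replace G with (fun _ : Xb => True); [exact Hfull|].
    apply pred_ext; intros [|]; tauto.
  - replace G with (fun x : Xb => x = true); [apply Hpt|].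
    apply pred_ext; intros [|]; split; intro; first [reflexivity | discriminate | tauto].
  - replace G with (fun x : Xb => x = false); [apply Hpt|].
    apply pred_ext; intros [|]; split; intro; first [reflexivity | discriminate | tauto].
  - replace G with (fun _ : Xb => False); [exact Hempty|].
    apply pred_ext; intros [|]; tauto.
Qed.

Definition coord (b : bool) (c : cap Xb) : R := capval c (fun x => x = b).

Lemma cap_Xb_formula (c : cap Xb) (G : Xb -> Prop) :
  capval c G = pat (G true) (G false) (coord true c) (coord false c).
Proof.
  revert G; apply Xb_setfun_ext.
  - rewrite cap_full; unfold pat; destruct dec; tauto.
  - rewrite cap_empty; unfold pat; repeat destruct dec; tauto.
  - intros [|]; unfold pat, coord; repeat destruct dec;
      first [reflexivity | exfalso; intuition discriminate].
Qed.

Definition bcap (b : bool) (p q : R) (Hp : 0 <= p <= 1) (Hq : 0 <= q <= 1) : cap Xb :=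
  @pair_cap Xb b (negb b) p q Xb_T1 Hp Hq.

Lemma bcap_coord b p q Hp Hq : coord b (bcap b p q Hp Hq) = p.
Proof.
  unfold coord, bcap; rewrite pair_cap_closed by apply Xb_closed.
  unfold pat; destruct b; repeat destruct dec;
    first [reflexivity | exfalso; intuition discriminate].
Qed.

Lemma bcap_coord_neg b p q Hp Hq : coord (negb b) (bcap b p q Hp Hq) = q.
Proof.
  unfold coord, bcap; rewrite pair_cap_closed by apply Xb_closed.
  unfold pat; destruct b; repeat destruct dec;
    first [reflexivity | exfalso; intuition discriminate].
Qed.

Definition coord_open (U : cap Xb -> Prop) : Prop :=
  forall c, U c -> exists e, 0 < e /\
    forall c', (forall b, Rabs (coord b c' - coord b c) < e) -> U c'.

Lemma coord_open_topology : is_topology coord_open.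
Proof.
  split; [|split].
  - intros c _; exists 1; split; [lra | tauto].
  - intros U V HU HV c [Uc Vc].
    destruct (HU c Uc) as [e1 [He1 H1]], (HV c Vc) as [e2 [He2 H2]].
    exists (Rmin e1 e2); split; [apply Rmin_pos; assumption|].
    intros c' Hc'. pose proof (Rmin_l e1 e2); pose proof (Rmin_r e1 e2).
    split; [apply H1 | apply H2]; intros b; specialize (Hc' b); lra.
  - intros S HS c [U [SU Uc]]. destruct (HS U SU c Uc) as [e [He H]].
    exists e; split; [exact He|]. intros c' Hc'; exists U; auto.
Qed.

Lemma cap_Xb_lipschitz (c c' : cap Xb) (G : Xb -> Prop) (e : R) : 0 < e ->
  (forall b, Rabs (coord b c' - coord b c) < e) -> Rabs (capval c' G - capval c G) < e.
Proof.
  intros He H. rewrite !cap_Xb_formula. unfold pat; repeat destruct dec;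
    first [apply H | rewrite Rminus_diag, Rabs_R0; exact He].
Qed.

Lemma M_Xb_open_coord_open (U : cap Xb -> Prop) : is_open (M Xb) U -> coord_open U.
Proof.
  intros H. apply H; [exact coord_open_topology|].
  intros V [[F [a [_ [_ ->]]]] | [W [a [_ [_ ->]]]]].
  - intros c Hc; cbv beta in Hc |- *. exists (a - capval c F); split; [lra|].
    intros c' Hc'. pose proof (cap_Xb_lipschitz c c' F (a - capval c F) ltac:(lra) Hc') as HF.
    apply Rabs_def2 in HF; lra.
  - intros c [K [HK [HKW Hk]]]. exists (capval c K - a); split; [lra|].
    intros c' Hc'. pose proof (cap_Xb_lipschitz c c' K (capval c K - a) ltac:(lra) Hc') as HK'.
    apply Rabs_def2 in HK'. exists K; split; [exact HK | split; [exact HKW | lra]].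
Qed.

(** Otherwise points escaping [O] just
    below level [s] cluster, in the other coordinate, at a capacity of level
    exactly [s], which lies in [O] together with a neighbourhood. *)
Lemma level_tube (b : bool) (O : cap Xb -> Prop) (s : R) :
  is_open (M Xb) O -> 0 < s <= 1 -> subset (level_set Xb (fun x => x = b) s) O ->
  exists r, 0 < r < s /\ subset (level_set Xb (fun x => x = b) r) O.
Proof.
  intros HO Hs Hsub. apply NNPP; intros Hno.
  assert (Hseq : forall n : nat, exists c, coord b c >= s - s * / (INR n + 2) /\ ~ O c).
  { intros n. pose proof (pos_INR n).
    assert (Hk : 0 < / (INR n + 2) < 1).
    { split; [apply Rinv_0_lt_compat; lra|].
      rewrite <- Rinv_1; apply Rinv_lt_contravar; lra. }
    apply NNPP; intros Hn; apply Hno.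
    exists (s - s * / (INR n + 2)); split; [nra|].
    intros c Hc. apply NNPP; intros HOc; apply Hn; exists c; split; [exact Hc | exact HOc]. }
  destruct (choice _ Hseq) as [cs Hcs].
  destruct (cluster_point (fun n => coord (negb b) (cs n))) as [l [Hl01 Hl]];
    [intros n; apply cap_bounds|].
  assert (Hs01 : 0 <= s <= 1) by lra.
  assert (Od : O (bcap b s l Hs01 Hl01)).
  { apply Hsub. change (coord b (bcap b s l Hs01 Hl01) >= s). rewrite bcap_coord; lra. }
  destruct (M_Xb_open_coord_open O HO _ Od) as [e [He Hball]].
  destruct (Hl e He) as [p [Hp Hinv]]. cbv beta in Hp.
  destruct (Hcs p) as [Hcp HnO]. apply HnO, Hball.
  assert (Hlt : coord b (cs p) < s).
  { apply Rnot_le_lt; intros Hge; apply HnO, Hsub. change (coord b (cs p) >= s); lra. }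
  intros b'. destruct (Bool.bool_dec b' b) as [->|Hb'].
  - rewrite bcap_coord. pose proof (pos_INR p).
    assert (Hinv2 : / (INR p + 2) < / (INR p + 1)) by (apply Rinv_lt_contravar; nra).
    assert (0 < / (INR p + 2)) by (apply Rinv_0_lt_compat; lra).
    rewrite Rabs_left by lra. nra.
  - replace b' with (negb b) by (destruct b, b'; simpl; congruence).
    rewrite bcap_coord_neg; exact Hp.
Qed.

Lemma level_value_left_continuous (C : cap (M Xb)) (b : bool) (t a : R) :
  0 < t <= 1 -> capval C (level_set Xb (fun x => x = b) t) < a ->
  exists r, 0 < r < t /\ capval C (level_set Xb (fun x => x = b) r) < a.
Proof.
  intros Ht Ha.
  destruct (cap_usc _ C _ a (level_closed _ _ t (Xb_closed _)) Ha) as [O [HO [HtO Hsmall]]].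
  destruct (level_tube b O t HO Ht HtO) as [r [Hr HrO]].
  exists r; split; [exact Hr|]. exact (Hsmall _ (level_closed _ _ r (Xb_closed _)) HrO).
Qed.

Lemma Xb_max_exists (C : cap (M Xb)) (b : bool) :
  exists m, is_max_level Xb (capval C) (fun x => x = b) m.
Proof.
  destruct (scaled_max (fun t => capval C (level_set Xb (fun x => x = b) t)))
    as [t [Ht Hmax]].
  - intros t _; apply cap_bounds.
  - intros t t' Htt' _; apply level_value_antitone; [apply Xb_closed | lra].
  - intros t a Ht Ha; exact (level_value_left_continuous C b t a Ht Ha).
  - exists (capval C (level_set Xb (fun x => x = b) t) * t).
    split; [exists t; split; [exact Ht | reflexivity] | exact Hmax].
Qed.

Lemma mu_point_bounds (C : cap (M Xb)) (b : bool) :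
  0 <= mu_bullet Xb (capval C) (fun x => x = b) <= 1.
Proof.
  destruct (Xb_max_exists C b) as [m Hm].
  rewrite (mu_bullet_max _ _ _ _ Hm). exact (is_max_level_bounds _ _ _ _ Hm).
Qed.

Definition mu_cap (C : cap (M Xb)) : cap Xb :=
  bcap true (mu_bullet Xb (capval C) (fun x => x = true))
    (mu_bullet Xb (capval C) (fun x => x = false))
    (mu_point_bounds C true) (mu_point_bounds C false).

Lemma mu_cap_spec (C : cap (M Xb)) (G : Xb -> Prop) :
  capval (mu_cap C) G = mu_bullet Xb (capval C) G.
Proof.
  revert G; apply Xb_setfun_ext.
  - rewrite cap_full, mu_bullet_full; reflexivity.
  - rewrite cap_empty, mu_bullet_empty; reflexivity.
  - intros [|]; [exact (bcap_coord true _ _ (mu_point_bounds C true) (mu_point_bounds C false))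
    | exact (bcap_coord_neg true _ _ (mu_point_bounds C true) (mu_point_bounds C false))].
Qed.

(** The preimage under [mu_bullet Xb] of a level set is a superlevel set of
    [C |-> mu_bullet C G]; for singletons it is closed by upper semicontinuity. *)
Lemma preimage_level_iff (C : cap (M Xb)) (G : Xb -> Prop) (t : R) :
  mu_bullet_preimage Xb (level_set Xb G t) C <-> mu_bullet Xb (capval C) G >= t.
Proof.
  split.
  - intros [c [Hc Hagree]]. unfold level_set in Hc.
    rewrite (Hagree G (Xb_closed G)) in Hc; exact Hc.
  - intros Ht. exists (mu_cap C); split.
    + unfold level_set; rewrite mu_cap_spec; exact Ht.
    + intros H _; apply mu_cap_spec.
Qed.

Lemma preimage_level_closed (b : bool) (t : R) :
  closed (M (M Xb)) (mu_bullet_preimage Xb (level_set Xb (fun x => x = b) t)).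
Proof.
  unfold closed.
  replace (fun C : M (M Xb) => ~ mu_bullet_preimage Xb (level_set Xb (fun x => x = b) t) C)
    with (fun C : cap (M Xb) => mu_bullet Xb (capval C) (fun x => x = b) < t).
  - apply mu_bullet_lt_open; [apply Xb_closed | intros C; apply Xb_max_exists].
  - apply pred_ext; intros C; rewrite preimage_level_iff.
    split; [intros H1 H2; lra | apply Rnot_ge_lt].
Qed.

Notation point_a := (fun x : Xb => x = true).

Lemma zero_in_I : 0 <= 0 <= 1. Proof. lra. Qed.
Lemma half_in_I : 0 <= 1/2 <= 1. Proof. lra. Qed.
Lemma one_in_I : 0 <= 1 <= 1. Proof. lra. Qed.

Definition c_half : cap Xb := bcap true (1/2) 0 half_in_I zero_in_I.
Definition c_one : cap Xb := bcap true 1 0 one_in_I zero_in_I.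
Definition c_zero : cap Xb := bcap true 0 0 zero_in_I zero_in_I.

Definition C1 : cap (M Xb) := @pair_cap (M Xb) c_half c_half 1 1 (M_T1 Xb) one_in_I one_in_I.
Definition C2 : cap (M Xb) := @pair_cap (M Xb) c_one c_zero (1/2) 0 (M_T1 Xb) half_in_I zero_in_I.

Definition gimel : cap (M (M Xb)) :=
  @pair_cap (M (M Xb)) C1 C2 0 0 (M_T1 (M Xb)) zero_in_I zero_in_I.

Lemma C1_level (t : R) : 0 < t <= 1 ->
  capval C1 (level_set Xb point_a t) = if Rle_dec t (1/2) then 1 else 0.
Proof.
  intros Ht. unfold C1; rewrite pair_cap_closed by (apply level_closed, Xb_closed).
  change (level_set Xb point_a t c_half) with (coord true c_half >= t).
  unfold c_half; rewrite bcap_coord.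
  unfold pat; destruct Rle_dec; repeat destruct dec; first [reflexivity | lra | tauto].
Qed.

Lemma C2_level (t : R) : 0 < t <= 1 -> capval C2 (level_set Xb point_a t) = 1/2.
Proof.
  intros Ht. unfold C2; rewrite pair_cap_closed by (apply level_closed, Xb_closed).
  change (level_set Xb point_a t c_one) with (coord true c_one >= t).
  change (level_set Xb point_a t c_zero) with (coord true c_zero >= t).
  unfold c_one, c_zero; rewrite !bcap_coord.
  unfold pat; repeat destruct dec; first [reflexivity | lra | tauto].
Qed.

Lemma gimel_value (S : M (M Xb) -> Prop) : closed (M (M Xb)) S ->
  capval gimel S = if dec (S C1 /\ S C2) then 1 else 0.
Proof.
  intros HS. unfold gimel; rewrite pair_cap_closed by exact HS.
  unfold pat; repeat destruct dec; first [reflexivity | tauto].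
Qed.

Lemma mu_C1 : mu_bullet Xb (capval C1) point_a = 1/2.
Proof. rewrite (mu_bullet_step _ _ _ (1/2) 1); [lra | lra | lra | exact C1_level]. Qed.

Lemma mu_C2 : mu_bullet Xb (capval C2) point_a = 1/2.
Proof.
  rewrite (mu_bullet_step _ _ _ 1 (1/2)); [lra | lra | lra |].
  intros s Hs; rewrite C2_level by exact Hs; destruct Rle_dec; [reflexivity | lra].
Qed.

Lemma inner_value (t : R) : 0 < t <= 1 ->
  mu_bullet (M Xb) (capval gimel) (level_set Xb point_a t)
  = if Rle_dec t (1/2) then 1/2 else 0.
Proof.
  intros Ht.
  assert (Hgimel : forall s, capval gimel (level_set (M Xb) (level_set Xb point_a t) s)
      = if dec (capval C1 (level_set Xb point_a t) >= s /\
                capval C2 (level_set Xb point_a t) >= s) then 1 else 0).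
  { intros s. rewrite gimel_value by (apply level_closed, level_closed, Xb_closed).
    reflexivity. }
  destruct (Rle_dec t (1/2)) as [Hle|Hgt].
  - rewrite (mu_bullet_step _ _ _ (1/2) 1); [lra | lra | lra |].
    intros s Hs. rewrite Hgimel, C1_level, C2_level by exact Ht.
    destruct (Rle_dec t (1/2)); [|lra].
    destruct Rle_dec; destruct dec; first [reflexivity | lra | tauto].
  - rewrite (mu_bullet_step _ _ _ 1 0); [lra | lra | lra |].
    intros s Hs. rewrite Hgimel, C1_level by exact Ht.
    destruct (Rle_dec t (1/2)); [lra|].
    destruct Rle_dec; destruct dec; first [reflexivity | lra | tauto].
Qed.

Lemma lhs_value : mu_bullet Xb (mu_bullet (M Xb) (capval gimel)) point_a = 1/4.
Proof. rewrite (mu_bullet_step _ _ _ (1/2) (1/2)); [lra | lra | lra | exact inner_value]. Qed.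

(** Right-hand side: [M(mu_bullet X) gimel] gives the level set [{c(a) >= t}]
    the value 1 exactly when [t <= 1/2], as [mu_bullet C1] and [mu_bullet C2]
    both give [{a}] the value [1/2]. *)
Lemma rhs_value : mu_bullet Xb (M_mu_bullet Xb gimel) point_a = 1/2.
Proof.
  rewrite (mu_bullet_step _ _ _ (1/2) 1); [lra | lra | lra |].
  intros t Ht. unfold M_mu_bullet. rewrite gimel_value by apply preimage_level_closed.
  pose proof (preimage_level_iff C1 point_a t) as H1.
  pose proof (preimage_level_iff C2 point_a t) as H2.
  rewrite mu_C1 in H1; rewrite mu_C2 in H2.
  destruct Rle_dec; destruct dec as [Hin|Hout]; first [reflexivity | tauto | exfalso].
  - apply Hout; split; [apply H1 | apply H2]; lra.
  - destruct Hin as [Hin1 _]; apply H1 in Hin1; lra.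
Qed.

Theorem proposition1 :
  exists X : space, compactum X /\
    exists gimel : M (M (M X)),
      exists F : X -> Prop, closed X F /\
        mu_bullet X (mu_bullet (M X) (capval gimel)) F
        <> mu_bullet X (M_mu_bullet X gimel) F.
Proof.
  exists Xb; split; [exact Xb_compactum|].
  exists gimel, point_a; split; [apply Xb_closed|].
  rewrite lhs_value, rhs_value; lra.
Qed.
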